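(* Consider an $M\times M$ input-queued switch, $\alpha>0$, $\lambda\in\Lambda$, and $q\in\mathcal I(\alpha)$. For every $(i,j)$ with $\lambda_{ij}>0$ there exists a permutation matrix $\pi$ with $\pi\cdot q^\alpha=\max_{\sigma\in\mathcal S}\sigma\cdot q^\alpha$ and $\pi_{ij}=1$ (powers taken componentwise).
   Context: Input-queued switch: queues indexed by $(i,j)$, $1\le i,j\le M$; schedule set $\mathcal S$ = all $M\times M$ permutation matrices; $x\cdot y=\sum_{ij}x_{ij}y_{ij}$. $\langle\mathcal S\rangle$ convex hull; $\Lambda=\{\lambda\in\mathbb R_+^{M\times M}:\lambda\le\sigma$ componentwise for some $\sigma\in\langle\mathcal S\rangle\}$. $E$ = extreme points of $\{\xi\ge0:\max_\pi\xi\cdot\pi\le1\}$, $\mathcal S^*$ its maximal elements, $\Xi(\lambda)=\{\xi\in\mathcal S^*:\xi\cdot\lambda=1\}$. $L_\alpha(q)=\sum_{ij}q_{ij}^{1+\alpha}/(1+\alpha)$; $\Delta_\alpha(q)$ is the unique minimizer of $L_\alpha(r)$ over $r\ge0$ subject to $\xi\cdot r\ge\xi\cdot q$ for all $\xi\in\Xi(\lambda)$ and $r_{ij}\le q_{ij}$ whenever $\lambda_{ij}=0$; $\mathcal I(\alpha)=\{q\ge0:\Delta_\alpha(q)=q\}$ (invariant states of MW-$\alpha$). *)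

From Stdlib Require Import Reals List.
Import ListNotations.
Open Scope R_scope.

(* An M x M real matrix is a function nat -> nat -> R; only entries with
   indices i, j < M are ever used (indices are 0-based). *)
Definition mx := nat -> nat -> R.

Definition sumM (M : nat) (f : nat -> R) : R :=
  fold_right Rplus 0 (map f (seq 0 M)).

Definition dot (M : nat) (x y : mx) : R :=
  sumM M (fun i => sumM M (fun j => x i j * y i j)).

Definition mx_eq (M : nat) (x y : mx) : Prop :=
  forall i j, (i < M)%nat -> (j < M)%nat -> x i j = y i j.

Definition mx_le (M : nat) (x y : mx) : Prop :=
  forall i j, (i < M)%nat -> (j < M)%nat -> x i j <= y i j.

Definition mx_nonneg (M : nat) (x : mx) : Prop :=
  forall i j, (i < M)%nat -> (j < M)%nat -> 0 <= x i j.

Definition is_perm_mx (M : nat) (p : mx) : Prop :=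
  (forall i j, (i < M)%nat -> (j < M)%nat -> p i j = 0 \/ p i j = 1) /\
  (forall i, (i < M)%nat -> sumM M (fun j => p i j) = 1) /\
  (forall j, (j < M)%nat -> sumM M (fun i => p i j) = 1).

Definition in_conv_hull_S (M : nat) (s : mx) : Prop :=
  exists l : list (R * mx),
    Forall (fun wp => 0 <= fst wp /\ is_perm_mx M (snd wp)) l /\
    fold_right Rplus 0 (map fst l) = 1 /\
    mx_eq M s (fun i j => fold_right Rplus 0 (map (fun wp => fst wp * snd wp i j) l)).

Definition in_Lambda (M : nat) (lam : mx) : Prop :=
  mx_nonneg M lam /\ exists s, in_conv_hull_S M s /\ mx_le M lam s.

Definition in_D (M : nat) (xi : mx) : Prop :=
  mx_nonneg M xi /\ forall p, is_perm_mx M p -> dot M xi p <= 1.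

Definition in_E (M : nat) (xi : mx) : Prop :=
  in_D M xi /\
  forall a b (t : R), in_D M a -> in_D M b -> 0 < t < 1 ->
    mx_eq M xi (fun i j => t * a i j + (1 - t) * b i j) ->
    mx_eq M a xi /\ mx_eq M b xi.

Definition in_Sstar (M : nat) (xi : mx) : Prop :=
  in_E M xi /\ forall xi', in_E M xi' -> mx_le M xi xi' -> mx_eq M xi' xi.

Definition in_Xi (M : nat) (lam xi : mx) : Prop :=
  in_Sstar M xi /\ dot M xi lam = 1.

(* x^a for x >= 0 and a > 0, with 0^a = 0 *)
Definition rpow (x a : R) : R :=
  if Rle_dec x 0 then 0 else Rpower x a.

Definition mx_pow (q : mx) (a : R) : mx := fun i j => rpow (q i j) a.

Definition L_alpha (M : nat) (alpha : R) (q : mx) : R :=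
  sumM M (fun i => sumM M (fun j => rpow (q i j) (1 + alpha) / (1 + alpha))).

(* feasible set of the optimisation problem defining Delta_alpha(q) *)
Definition feasible (M : nat) (lam q r : mx) : Prop :=
  mx_nonneg M r /\
  (forall xi, in_Xi M lam xi -> dot M xi q <= dot M xi r) /\
  (forall i j, (i < M)%nat -> (j < M)%nat -> lam i j = 0 -> r i j <= q i j).

(* q in I(alpha): q >= 0 and Delta_alpha(q) = q, i.e. q is the unique
   minimiser of L_alpha over the feasible set *)
Definition invariant (M : nat) (alpha : R) (lam q : mx) : Prop :=
  mx_nonneg M q /\
  feasible M lam q q /\
  (forall r, feasible M lam q r -> L_alpha M alpha q <= L_alpha M alpha r) /\
  (forall r, feasible M lam q r -> L_alpha M alpha r = L_alpha M alpha q ->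
             mx_eq M r q).

From Stdlib Require Import Reals List Lra Lia.
Open Scope R_scope.

(* If no maximum-weight schedule for the weights q^alpha serves (i,j), write
   lam <= sum_k c_k pi_k with some pi_k serving (i,j) and c_k > 0; then lam . q^alpha
   falls strictly below the weight m . q^alpha of some schedule m.  At a fixed point q
   of MW-alpha the opposite inequality holds: moving q slightly in the direction
   lam - m (m cut down to the support of q) stays feasible, because
   xi . lam = 1 >= xi . m for xi in Xi(lam), and it changes L_alpha at first order by
   (lam - m) . q^alpha < 0, contradicting the minimality of q. *)

Definition lsum {A} (l : list A) (f : A -> R) : R := fold_right Rplus 0 (map f l).

Lemma lsum_nil {A} (f : A -> R) : lsum nil f = 0.
Proof. reflexivity. Qed.

Lemma lsum_cons {A} (a : A) l f : lsum (a :: l) f = f a + lsum l f.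
Proof. reflexivity. Qed.

Lemma lsum_ext {A} (l : list A) f g :
  (forall x, In x l -> f x = g x) -> lsum l f = lsum l g.
Proof. intros H; unfold lsum; f_equal; apply map_ext_in, H. Qed.

Lemma lsum_le {A} (l : list A) f g :
  (forall x, In x l -> f x <= g x) -> lsum l f <= lsum l g.
Proof.
  induction l as [|a l IH]; intros H; rewrite ?lsum_nil, ?lsum_cons; [lra|].
  apply Rplus_le_compat; [apply H; left | apply IH; intros; apply H; right]; auto.
Qed.

Lemma lsum_lt {A} (l : list A) f g x0 :
  (forall x, In x l -> f x <= g x) -> In x0 l -> f x0 < g x0 -> lsum l f < lsum l g.
Proof.
  induction l as [|a l IH]; intros H Hin Hlt; [destruct Hin|].
  rewrite !lsum_cons; destruct Hin as [<-|Hin].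
  - apply Rplus_lt_le_compat; [exact Hlt | apply lsum_le; intros; apply H; right; auto].
  - apply Rplus_le_lt_compat; [apply H; left; auto | apply IH; auto; intros; apply H; right; auto].
Qed.

Lemma lsum_plus {A} (l : list A) f g : lsum l (fun x => f x + g x) = lsum l f + lsum l g.
Proof. induction l as [|a l IH]; rewrite ?lsum_nil, ?lsum_cons, ?IH; ring. Qed.

Lemma lsum_scal {A} (l : list A) c f : lsum l (fun x => c * f x) = c * lsum l f.
Proof. induction l as [|a l IH]; rewrite ?lsum_nil, ?lsum_cons, ?IH; ring. Qed.

Lemma lsum_const {A} (l : list A) c : lsum l (fun _ => c) = INR (length l) * c.
Proof.
  induction l as [|a l IH]; rewrite ?lsum_nil, ?lsum_cons, ?IH; simpl length;
    rewrite ?S_INR; simpl INR; ring.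
Qed.

Lemma lsum_pos_exists {A} (l : list A) f : 0 < lsum l f -> exists x, In x l /\ 0 < f x.
Proof.
  induction l as [|a l IH]; rewrite ?lsum_nil, ?lsum_cons; intros H; [lra|].
  destruct (Rlt_dec 0 (f a)) as [Ha|Ha].
  - exists a; split; [left|]; auto.
  - destruct IH as [x [Hx Hfx]]; [lra|]. exists x; split; [right|]; auto.
Qed.

Lemma convex_comb_lt {A} (l : list A) (c v : A -> R) b x0 :
  (forall x, In x l -> 0 <= c x /\ v x <= b) -> In x0 l -> 0 < c x0 -> v x0 < b ->
  lsum l c = 1 -> lsum l (fun x => c x * v x) < b.
Proof.
  intros Hl Hx0 Hc0 Hv0 Hsum.
  apply Rlt_le_trans with (lsum l (fun x => b * c x)).
  - apply lsum_lt with x0.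
    + intros x Hx; destruct (Hl x Hx); nra.
    + exact Hx0.
    + nra.
  - rewrite lsum_scal, Hsum; lra.
Qed.

Lemma exists_max_list {A} (P : A -> Prop) (v : A -> R) x0 l :
  P x0 -> (forall x, In x l -> P x) ->
  exists m, P m /\ v x0 <= v m /\ forall x, In x l -> v x <= v m.
Proof.
  intros H0; induction l as [|a l IH]; intros Hl.
  - exists x0; repeat split; [auto|lra|intros _ []].
  - destruct IH as [m [Hm [Hm0 Hml]]]; [intros; apply Hl; right; auto|].
    destruct (Rle_dec (v a) (v m)).
    + exists m; repeat split; auto. intros x [<-|Hx]; auto.
    + exists a; repeat split; [apply Hl; left; auto|lra|].
      intros x [<-|Hx]; [lra|]. specialize (Hml x Hx); lra.
Qed.

Definition sum2 (M : nat) (f : nat -> nat -> R) : R := sumM M (fun i => sumM M (f i)).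

Lemma sumM_lsum M f : sumM M f = lsum (seq 0 M) f.
Proof. reflexivity. Qed.

Lemma sum2_le M f g :
  (forall i j, (i < M)%nat -> (j < M)%nat -> f i j <= g i j) -> sum2 M f <= sum2 M g.
Proof.
  intros H; unfold sum2; rewrite !sumM_lsum; apply lsum_le; intros i Hi.
  rewrite !sumM_lsum; apply lsum_le; intros j Hj.
  apply in_seq in Hi, Hj; apply H; lia.
Qed.

Lemma sum2_ext M f g :
  (forall i j, (i < M)%nat -> (j < M)%nat -> f i j = g i j) -> sum2 M f = sum2 M g.
Proof.
  intros H; apply Rle_antisym; apply sum2_le; intros i j Hi Hj; rewrite H; auto; lra.
Qed.

Lemma sum2_plus M f g : sum2 M (fun i j => f i j + g i j) = sum2 M f + sum2 M g.
Proof.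
  unfold sum2; rewrite !sumM_lsum, <- lsum_plus; apply lsum_ext; intros i _.
  rewrite !sumM_lsum; apply lsum_plus.
Qed.

Lemma sum2_scal M c f : sum2 M (fun i j => c * f i j) = c * sum2 M f.
Proof.
  unfold sum2; rewrite !sumM_lsum, <- lsum_scal; apply lsum_ext; intros i _.
  rewrite !sumM_lsum; apply lsum_scal.
Qed.

Lemma sum2_minus M f g : sum2 M (fun i j => f i j - g i j) = sum2 M f - sum2 M g.
Proof.
  replace (sum2 M f - sum2 M g) with (sum2 M f + -1 * sum2 M g) by ring.
  rewrite <- sum2_scal, <- sum2_plus; apply sum2_ext; intros; ring.
Qed.

Lemma sum2_const M c : sum2 M (fun _ _ => c) = INR M * INR M * c.
Proof.
  unfold sum2; rewrite !sumM_lsum.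
  rewrite (lsum_ext _ _ (fun _ => INR M * c)), lsum_const, length_seq; [ring|].
  intros i _; rewrite ?sumM_lsum, lsum_const, length_seq; reflexivity.
Qed.

Lemma dot_sum2 M x y : dot M x y = sum2 M (fun i j => x i j * y i j).
Proof. reflexivity. Qed.

Lemma dot_lsum_l M (l : list (R * mx)) y :
  dot M (fun i j => lsum l (fun wp => fst wp * snd wp i j)) y
  = lsum l (fun wp => fst wp * dot M (snd wp) y).
Proof.
  induction l as [|a l IH]; rewrite lsum_nil || rewrite lsum_cons, <- IH; rewrite !dot_sum2.
  - rewrite (sum2_ext _ _ (fun _ _ => 0)), sum2_const; [ring|].
    intros; rewrite lsum_nil; ring.
  - rewrite <- sum2_scal, <- sum2_plus; apply sum2_ext; intros; rewrite lsum_cons; ring.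
Qed.

Lemma rpow_pos x a : 0 < x -> rpow x a = Rpower x a.
Proof. intros H; unfold rpow; destruct (Rle_dec x 0); [lra|auto]. Qed.

Lemma rpow_nonpos x a : x <= 0 -> rpow x a = 0.
Proof. intros H; unfold rpow; destruct (Rle_dec x 0); [auto|lra]. Qed.

Lemma Rpower_gt0 x a : 0 < Rpower x a.
Proof. apply exp_pos. Qed.

Lemma rpow_ge0 x a : 0 <= rpow x a.
Proof. unfold rpow; destruct (Rle_dec x 0); [lra|left; apply Rpower_gt0]. Qed.

Lemma Rpower_tangent_gap alpha x y : 0 <= alpha -> 0 < x -> 0 < y ->
  Rpower y (1 + alpha) - Rpower x (1 + alpha) <= (1 + alpha) * (y - x) * Rpower y alpha.
Proof.
  intros Ha Hx Hy.
  pose (f := fun u => Rpower u (1 + alpha)).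
  pose (f' := fun c => (1 + alpha) * Rpower c alpha).
  assert (Hd : forall c, 0 < c -> derivable_pt_lim f c (f' c)).
  { intros c Hc; unfold f'; replace alpha with (1 + alpha - 1) at 2 by ring.
    apply derivable_pt_lim_power; exact Hc. }
  destruct (Rtotal_order x y) as [Hlt|[<-|Hgt]].
  - destruct (MVT_cor2 f f' x y Hlt) as [c [Hmvt Hc]]; [intros c Hc; apply Hd; lra|].
    unfold f, f' in Hmvt.
    assert (Rpower c alpha <= Rpower y alpha) by (apply Rle_Rpower_l; lra).
    assert (0 <= (1 + alpha) * ((y - x) * (Rpower y alpha - Rpower c alpha)))
      by (apply Rmult_le_pos; [lra|apply Rmult_le_pos; lra]).
    nra.
  - lra.
  - destruct (MVT_cor2 f f' y x Hgt) as [c [Hmvt Hc]]; [intros c Hc; apply Hd; lra|].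
    unfold f, f' in Hmvt.
    assert (Rpower y alpha <= Rpower c alpha) by (apply Rle_Rpower_l; lra).
    assert (0 <= (1 + alpha) * ((x - y) * (Rpower c alpha - Rpower y alpha)))
      by (apply Rmult_le_pos; [lra|apply Rmult_le_pos; lra]).
    nra.
Qed.

(* Convexity of [t |-> t^(1+alpha)/(1+alpha)], whose derivative is [t^alpha]. *)
Lemma rpow_convex_gap alpha x y : 0 < alpha -> 0 <= x -> 0 <= y ->
  rpow y (1 + alpha) / (1 + alpha) - rpow x (1 + alpha) / (1 + alpha)
  <= (y - x) * rpow y alpha.
Proof.
  intros Ha Hx Hy.
  enough (rpow y (1 + alpha) - rpow x (1 + alpha) <= (1 + alpha) * (y - x) * rpow y alpha)
    by (apply Rmult_le_reg_l with (1 + alpha); [lra|]; field_simplify; [nra|lra]).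
  destruct (Req_dec y 0) as [->|Hy0].
  - rewrite !(rpow_nonpos 0) by lra; pose proof (rpow_ge0 x (1 + alpha)); lra.
  - rewrite !(rpow_pos y) by lra.
    destruct (Req_dec x 0) as [->|Hx0].
    + rewrite rpow_nonpos, Rpower_plus, Rpower_1 by lra.
      assert (0 < y * Rpower y alpha) by (apply Rmult_lt_0_compat; [lra|apply Rpower_gt0]).
      nra.
    + rewrite rpow_pos by lra; apply Rpower_tangent_gap; lra.
Qed.

Lemma rpow_continuous alpha a eta : 0 < alpha -> 0 <= a -> 0 < eta ->
  exists delta, 0 < delta /\ forall x, 0 <= x -> Rabs (x - a) < delta ->
    Rabs (rpow x alpha - rpow a alpha) < eta.
Proof.
  intros Ha Ha0 He.
  destruct (Req_dec a 0) as [->|Ha0'].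
  - exists (Rpower eta (/ alpha)); split; [apply Rpower_gt0|].
    intros x Hx Hd; rewrite (rpow_nonpos 0), Rminus_0_r in * by lra.
    destruct (Req_dec x 0) as [->|Hx0].
    + rewrite rpow_nonpos, Rabs_R0; lra.
    + rewrite rpow_pos by lra.
      rewrite Rabs_right in * by (try left; try apply Rpower_gt0; lra).
      replace eta with (Rpower (Rpower eta (/ alpha)) alpha)
        by (rewrite Rpower_mult, Rinv_l, Rpower_1; lra).
      apply Rlt_Rpower_l; lra.
  - assert (Hcont : continuity_pt (fun u => Rpower u alpha) a).
    { apply derivable_continuous_pt; exists (alpha * Rpower a (alpha - 1)).
      apply derivable_pt_lim_power; lra. }
    destruct (Hcont eta He) as [d0 [Hd0 Hnear]].
    exists (Rmin d0 a); split; [apply Rmin_pos; lra|].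
    intros x Hx Hd.
    assert (Hxd0 : Rabs (x - a) < d0) by (eapply Rlt_le_trans; [exact Hd|apply Rmin_l]).
    assert (Hxa : Rabs (x - a) < a) by (eapply Rlt_le_trans; [exact Hd|apply Rmin_r]).
    assert (Hxp : 0 < x) by (apply Rabs_def2 in Hxa; lra).
    rewrite !rpow_pos by lra.
    destruct (Req_dec x a) as [->|Hxa'].
    + rewrite Rminus_diag, Rabs_R0; lra.
    + apply (Hnear x); split; [split; [exact I|auto]|exact Hxd0].
Qed.

Definition near_0plus (P : R -> Prop) : Prop :=
  exists delta, 0 < delta /\ forall e, 0 < e < delta -> P e.

Lemma near_0plus_and (P Q : R -> Prop) :
  near_0plus P -> near_0plus Q -> near_0plus (fun e => P e /\ Q e).
Proof.
  intros [d1 [Hd1 H1]] [d2 [Hd2 H2]]; exists (Rmin d1 d2); split; [apply Rmin_pos; auto|].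
  intros e He; pose proof (Rmin_l d1 d2); pose proof (Rmin_r d1 d2).
  split; [apply H1|apply H2]; lra.
Qed.

Lemma near_0plus_forall_lt (P : nat -> R -> Prop) n :
  (forall k, (k < n)%nat -> near_0plus (P k)) ->
  near_0plus (fun e => forall k, (k < n)%nat -> P k e).
Proof.
  induction n as [|n IH]; intros H.
  - exists 1; split; [lra|]; intros; lia.
  - destruct (near_0plus_and _ _ (IH (fun k Hk => H k (Nat.lt_lt_succ_r _ _ Hk)))
                (H n (Nat.lt_succ_diag_r n))) as [d [Hd Hall]].
    exists d; split; [exact Hd|]; intros e He k Hk.
    destruct (Hall e He) as [Hlt Hn].
    destruct (Nat.eq_dec k n) as [->|]; [exact Hn|apply Hlt; lia].
Qed.

Lemma near_0plus_nonneg a b : 0 <= a -> (a = 0 -> 0 <= b) ->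
  near_0plus (fun e => 0 <= a + e * b).
Proof.
  intros Ha Hb; destruct (Req_dec a 0) as [->|Ha0].
  - exists 1; split; [lra|]; intros e He; specialize (Hb eq_refl); nra.
  - assert (Hb1 : 0 < Rabs b + 1) by (pose proof (Rabs_pos b); lra).
    exists (a / (Rabs b + 1)); split; [apply Rdiv_lt_0_compat; lra|].
    intros e [He0 He]; apply Rmult_lt_compat_r with (r := Rabs b + 1) in He; [|lra].
    unfold Rdiv in He; rewrite Rmult_assoc, Rinv_l, Rmult_1_r in He by lra.
    pose proof (Rabs_pos b); pose proof (Rle_abs (- b)); rewrite Rabs_Ropp in *; nra.
Qed.

Lemma near_0plus_rpow_dir alpha a b eta : 0 < alpha -> 0 <= a -> 0 < eta ->
  near_0plus (fun e => 0 <= a + e * b ->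
    b * rpow (a + e * b) alpha <= b * rpow a alpha + eta).
Proof.
  intros Ha Ha0 He.
  assert (Hb1 : 0 < Rabs b + 1) by (pose proof (Rabs_pos b); lra).
  destruct (rpow_continuous alpha a (eta / (Rabs b + 1)) Ha Ha0) as [d [Hd Hnear]];
    [apply Rdiv_lt_0_compat; lra|].
  exists (d / (Rabs b + 1)); split; [apply Rdiv_lt_0_compat; lra|].
  intros e [He0 Hed] Hnn.
  apply Rmult_lt_compat_r with (r := Rabs b + 1) in Hed; [|lra].
  unfold Rdiv in Hed; rewrite Rmult_assoc, Rinv_l, Rmult_1_r in Hed by lra.
  assert (Hclose : Rabs (a + e * b - a) < d).
  { replace (a + e * b - a) with (e * b) by ring.
    rewrite Rabs_mult, (Rabs_right e) by lra; pose proof (Rabs_pos b); nra. }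
  specialize (Hnear _ Hnn Hclose).
  set (u := rpow (a + e * b) alpha - rpow a alpha) in *.
  assert (Hbu : b * u <= Rabs b * Rabs u) by (rewrite <- Rabs_mult; apply Rle_abs).
  assert (Rabs b * Rabs u <= Rabs b * (eta / (Rabs b + 1)))
    by (apply Rmult_le_compat_l; [apply Rabs_pos|lra]).
  assert (Rabs b * (eta / (Rabs b + 1)) <= eta).
  { apply Rmult_le_reg_r with (Rabs b + 1); [lra|].
    field_simplify; [|lra]. pose proof (Rabs_pos b); nra. }
  unfold u in *; nra.
Qed.

Lemma L_alpha_sum2 M alpha q :
  L_alpha M alpha q = sum2 M (fun i j => rpow (q i j) (1 + alpha) / (1 + alpha)).
Proof. reflexivity. Qed.

Lemma L_alpha_descent M alpha q d : 0 < alpha -> mx_nonneg M q ->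
  (forall i j, (i < M)%nat -> (j < M)%nat -> q i j = 0 -> 0 <= d i j) ->
  dot M d (mx_pow q alpha) < 0 ->
  exists e, 0 < e /\ mx_nonneg M (fun i j => q i j + e * d i j) /\
    L_alpha M alpha (fun i j => q i j + e * d i j) < L_alpha M alpha q.
Proof.
  intros Ha Hq Hd0 HD.
  set (D := dot M d (mx_pow q alpha)) in *.
  set (N := INR M * INR M).
  assert (HN : 0 <= N) by (apply Rmult_le_pos; apply pos_INR).
  set (eta := - D / (N + 1)).
  assert (Heta : 0 < eta) by (apply Rdiv_lt_0_compat; lra).
  destruct (near_0plus_forall_lt (fun i e => forall j, (j < M)%nat ->
      0 <= q i j + e * d i j /\
      d i j * rpow (q i j + e * d i j) alpha <= d i j * rpow (q i j) alpha + eta) M)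
    as [delta [Hdelta Hsmall]].
  { intros i Hi; apply near_0plus_forall_lt; intros j Hj.
    destruct (near_0plus_and _ _ (near_0plus_nonneg (q i j) (d i j) (Hq i j Hi Hj) (Hd0 i j Hi Hj))
                (near_0plus_rpow_dir alpha (q i j) (d i j) eta Ha (Hq i j Hi Hj) Heta))
      as [d' [Hd' Hboth]].
    exists d'; split; [exact Hd'|]; intros e He; destruct (Hboth e He); auto. }
  set (e := delta / 2).
  assert (He : 0 < e < delta) by (unfold e; lra).
  exists e; split; [lra|split].
  - intros i j Hi Hj; apply (Hsmall e He i Hi j Hj).
  - enough (Hgap : L_alpha M alpha (fun i j => q i j + e * d i j) - L_alpha M alpha q
                   <= e * (D + N * eta)).
    { assert (D + N * eta < 0)
        by (unfold eta; replace (D + N * (- D / (N + 1))) with (D / (N + 1)) by (field; lra);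
            apply Rdiv_neg_pos; lra).
      nra. }
    rewrite !L_alpha_sum2, <- sum2_minus.
    apply Rle_trans with (sum2 M (fun i j => e * (d i j * mx_pow q alpha i j + eta))).
    + apply sum2_le; intros i j Hi Hj; destruct (Hsmall e He i Hi j Hj) as [Hnn Hdir].
      eapply Rle_trans; [apply rpow_convex_gap; auto|].
      replace (q i j + e * d i j - q i j) with (e * d i j) by ring.
      unfold mx_pow; rewrite Rmult_assoc; apply Rmult_le_compat_l; lra.
    + rewrite sum2_scal, sum2_plus, sum2_const, <- dot_sum2; fold D N; lra.
Qed.

Lemma Xi_dot_perm_le M lam xi p : in_Xi M lam xi -> is_perm_mx M p -> dot M xi p <= 1.
Proof. intros [[[[_ HD] _] _] _]; apply HD. Qed.

Lemma invariant_perm_weight_le M alpha lam q m : 0 < alpha -> mx_nonneg M lam ->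
  invariant M alpha lam q -> is_perm_mx M m ->
  dot M m (mx_pow q alpha) <= dot M lam (mx_pow q alpha).
Proof.
  intros Ha Hlam [Hq [_ [Hmin _]]] Hm; apply Rnot_lt_le; intros Hlt.
  set (rho := fun i j => if Rlt_dec 0 (q i j) then m i j else 0).
  set (d := fun i j => lam i j - rho i j).
  assert (Hrho : forall i j, (i < M)%nat -> (j < M)%nat -> 0 <= rho i j <= m i j).
  { intros i j Hi Hj; unfold rho; destruct (proj1 Hm i j Hi Hj) as [-> | ->];
      destruct (Rlt_dec 0 (q i j)); lra. }
  assert (Hrho_w : dot M rho (mx_pow q alpha) = dot M m (mx_pow q alpha)).
  { rewrite !dot_sum2; apply sum2_ext; intros i j Hi Hj; unfold rho, mx_pow.
    destruct (Rlt_dec 0 (q i j)); [reflexivity|rewrite rpow_nonpos by lra; ring]. }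
  destruct (L_alpha_descent M alpha q d Ha Hq) as [e [He [Hnn HL]]].
  - intros i j Hi Hj Hq0; unfold d, rho; rewrite Hq0.
    destruct (Rlt_dec 0 0); [lra|]; rewrite Rminus_0_r; apply Hlam; auto.
  - unfold d; rewrite dot_sum2, (sum2_ext _ _ (fun i j =>
        lam i j * mx_pow q alpha i j - rho i j * mx_pow q alpha i j)) by (intros; ring).
    rewrite sum2_minus, <- !dot_sum2; lra.
  - apply (Rlt_not_le _ _ HL), Hmin; split; [exact Hnn|split].
    + intros xi Hxi.
      pose proof (Xi_dot_perm_le M lam xi m Hxi Hm) as Hxi_m.
      destruct Hxi as [[[[Hxi0 _] _] _] Hxi_lam].
      assert (Hxi_rho : dot M xi rho <= dot M xi m).
      { rewrite !dot_sum2; apply sum2_le; intros i j Hi Hj.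
        apply Rmult_le_compat_l; [apply Hxi0|apply Hrho]; auto. }
      replace (dot M xi (fun i j => q i j + e * d i j))
        with (dot M xi q + e * (dot M xi lam - dot M xi rho)).
      2:{ rewrite !dot_sum2, <- sum2_minus, <- sum2_scal, <- sum2_plus.
          apply sum2_ext; intros; unfold d; ring. }
      rewrite Hxi_lam.
      assert (0 <= e * (1 - dot M xi rho)) by (apply Rmult_le_pos; lra); lra.
    + intros i j Hi Hj Hlam0; unfold d; rewrite Hlam0.
      specialize (Hrho i j Hi Hj); nra.
Qed.

Lemma conv_hull_dot M (l : list (R * mx)) s y :
  mx_eq M s (fun i j => lsum l (fun wp => fst wp * snd wp i j)) ->
  dot M s y = lsum l (fun wp => fst wp * dot M (snd wp) y).
Proof.
  intros Hs; rewrite <- dot_lsum_l, !dot_sum2; apply sum2_ext; intros i j Hi Hj.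
  rewrite Hs; auto.
Qed.

Lemma conv_hull_support M (l : list (R * mx)) s i j :
  (forall wp, In wp l -> 0 <= fst wp /\ is_perm_mx M (snd wp)) ->
  mx_eq M s (fun i j => lsum l (fun wp => fst wp * snd wp i j)) ->
  (i < M)%nat -> (j < M)%nat -> 0 < s i j ->
  exists c p, In (c, p) l /\ 0 < c /\ p i j = 1.
Proof.
  intros Hl Hs Hi Hj Hpos; rewrite Hs in Hpos by auto.
  destruct (lsum_pos_exists _ _ Hpos) as [[c p] [Hin Hcp]].
  destruct (Hl _ Hin) as [Hc [Hp01 _]]; cbn in Hcp, Hc, Hp01.
  destruct (Hp01 i j Hi Hj) as [Hp0|Hp1]; rewrite ?Hp0, ?Hp1 in Hcp; [lra|].
  exists c, p; repeat split; auto; lra.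
Qed.

Theorem lemmaA3 (M : nat) (alpha : R) (lam q : mx) :
  0 < alpha ->
  in_Lambda M lam ->
  invariant M alpha lam q ->
  forall i j, (i < M)%nat -> (j < M)%nat -> 0 < lam i j ->
  exists p, is_perm_mx M p /\
    (forall s, is_perm_mx M s ->
       dot M s (mx_pow q alpha) <= dot M p (mx_pow q alpha)) /\
    p i j = 1.
Proof.
  intros Ha [Hlam [sig [[l [Hl [Hsum Hsig]]] Hle]]] Hinv i j Hi Hj Hlij.
  rewrite Forall_forall in Hl.
  set (w := mx_pow q alpha).
  assert (Hlam_sig : dot M lam w <= dot M sig w).
  { rewrite !dot_sum2; apply sum2_le; intros k k' Hk Hk'.
    apply Rmult_le_compat_r; [apply rpow_ge0|apply Hle; auto]. }
  destruct (conv_hull_support M l sig i j Hl Hsig Hi Hj) as [c0 [p0 [Hin0 [Hpos Hp0ij]]]].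
  { apply Rlt_le_trans with (lam i j); auto. }
  exists p0; split; [apply (Hl _ Hin0)|split; [|exact Hp0ij]].
  intros s Hs; apply Rnot_lt_le; intros Hlt.
  destruct (exists_max_list (is_perm_mx M) (fun p => dot M p w) s (map snd l) Hs)
    as [m [Hm [Hsm Hlm]]].
  { intros p Hp; apply in_map_iff in Hp as [wp [<- Hwp]]; apply Hl, Hwp. }
  assert (Havg : lsum l (fun wp => fst wp * dot M (snd wp) w) < dot M m w).
  { apply convex_comb_lt with (c0, p0); cbn; [|exact Hin0|exact Hpos|lra|exact Hsum].
    intros wp Hwp; split; [apply Hl, Hwp|apply Hlm, in_map, Hwp]. }
  pose proof (invariant_perm_weight_le M alpha lam q m Ha Hlam Hinv Hm) as Hm_lam.
  rewrite (conv_hull_dot M l sig w) in Hlam_sig by exact Hsig.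
  fold w in Hm_lam; lra.
Qed.
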